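(* Every closed interval $[a,b]$ in $\overline{\mathbb{R}}$ (with $a<b$ in $\overline{\mathbb{R}}$) is the set of right hand sequential secant derivatives at $0$ of some continuous function $f:[0,1]\to\mathbb{R}$.
   Context: $\overline{\mathbb{R}}=\mathbb{R}\cup\{\pm\infty\}$, and $[a,b]=\{t\in\overline{\mathbb{R}}:a\le t\le b\}$. $L\in\overline{\mathbb{R}}$ is a right hand sequential secant derivative of $f$ at $0$ if there is a sequence $h_n>0$ with $h_n\to0$ and $\frac{f(h_n)-f(0)}{h_n}\to L$ as $n\to\infty$. *)

From HB Require Import structures.
From mathcomp Require Import all_boot all_order all_algebra.
From mathcomp Require Import all_classical all_reals all_analysis.
Set Implicit Arguments. Unset Strict Implicit. Unset Printing Implicit Defensive.
Import Order.TTheory GRing.Theory Num.Theory.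
Import numFieldNormedType.Exports.
Local Open Scope classical_set_scope.
Local Open Scope ring_scope.

Definition rh_seq_secant_derivative (R : realType) (f : R -> R) (L : \bar R) : Prop :=
  exists h : R^nat,
    (forall n, 0 < h n <= 1) /\
    h @ \oo --> (0 : R) /\
    (fun n => ((f (h n) - f 0) / h n)%:E) @ \oo --> L.

Definition ereal_cc (R : realType) (a b : \bar R) : set (\bar R) :=
  [set t | (a <= t)%E /\ (t <= b)%E].

From HB Require Import structures.
From mathcomp Require Import all_boot all_order all_algebra.
From mathcomp Require Import all_classical all_reals all_analysis.
From mathcomp Require Import ring lra.
Import Order.TTheory GRing.Theory Num.Theory.
Import numFieldNormedType.Exports.
Local Open Scope classical_set_scope.
Local Open Scope ring_scope.

(* For f x = x * p |x| the secant quotient at 0 is p h itself, so the right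
   hand sequential secant derivatives of f are the limits of p along sequences
   h_n -> 0+.  When p is continuous on (0, +oo) this cluster set is an
   interval: a level strictly between the limits along (x_n) and (y_n) is
   attained, by the intermediate value theorem, between x_n and y_n.  So it
   suffices to find p with values in [a, b] that tends to a along
   t_n = 1/(3 pi/2 + 2 pi n) and to b along t_n = 1/(pi/2 + 2 pi n), where
   sin (1/t_n) is -1 and 1 respectively.  The functions
   al + be sin (1/t) + (ga + de sin (1/t)) / sqrt t do this for suitable
   coefficients, and since they are O(1/sqrt t), f stays continuous at 0. *)

Section ClusterSet.
Context {R : realType}.
Implicit Types (p : R -> R) (a b : \bar R).

Lemma IVT_minmax p u v l :
  {within `[Num.min u v, Num.max u v], continuous p} ->
  Num.min (p u) (p v) <= l <= Num.max (p u) (p v) ->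
  exists2 z, z \in `[Num.min u v, Num.max u v] & p z = l.
Proof.
have [uv|/ltW vu] := leP u v; first exact: IVT.
by rewrite minC maxC; exact: IVT.
Qed.

Lemma IVT_pos p u v l : (forall t, 0 < t -> {for t, continuous p}) ->
  0 < u -> 0 < v -> p u < l < p v -> exists2 z, 0 < z <= Num.max u v & p z = l.
Proof.
move=> p_cont u0 v0 /andP[pul lpv].
have m0 : 0 < Num.min u v by rewrite lt_min u0.
have [z] : exists2 z, z \in `[Num.min u v, Num.max u v] & p z = l.
  apply: IVT_minmax; last by rewrite ge_min le_max (ltW pul) (ltW lpv) orbT.
  apply: continuous_in_subspaceT => t; rewrite inE /= in_itv /= => /andP[mt _].
  exact/p_cont/(lt_le_trans m0).
by rewrite in_itv /= => /andP[mz zM] pz; exists z; rewrite ?(lt_le_trans m0).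
Qed.

Definition cluster0r p : set (\bar R) :=
  [set L | exists h : R^nat, (forall n, 0 < h n <= 1) /\ h @ \oo --> 0 /\
     (fun n => (p (h n))%:E) @ \oo --> L].

Lemma cluster0r_subset_cc p a b :
  (forall t, 0 < t -> (a <= (p t)%:E <= b)%E) -> cluster0r p `<=` ereal_cc a b.
Proof.
move=> p_ab L [h [h01 [_ phL]]].
have ph n : (a <= (p (h n))%:E <= b)%E by apply: p_ab; case/andP: (h01 n).
split; [apply: (cvge_ge _ phL) | apply: (cvge_le _ phL)];
  by apply: nearW => n; case/andP: (ph n).
Qed.

Lemma cluster0r_cc_subset p a b :
  (forall t, 0 < t -> {for t, continuous p}) ->
  cluster0r p a -> cluster0r p b -> ereal_cc a b `<=` cluster0r p.
Proof.
move=> p_cont pa pb L [aL Lb].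
have [->|La] := eqVneq L a => //; have [->|Lb'] := eqVneq L b => //.
have {aL La} aL : (a < L)%E by rewrite lt_neqAle eq_sym La aL.
have {Lb Lb'} Lb : (L < b)%E by rewrite lt_neqAle Lb' Lb.
case: L aL Lb => [l aL lb| _ |];
  [|by rewrite ltNge leey|by rewrite ltNge leNye].
case: pa pb => [x [x01 [x0 px]]] [y [y01 [y0 py]]].
have /choice[z zP] n : exists z, 0 < z <= Num.max (x n) (y n) /\
    (p (x n) < l < p (y n) -> p z = l).
  have /andP[xn0 _] := x01 n; have /andP[yn0 _] := y01 n.
  have [|_] := boolP (p (x n) < l < p (y n)).
    by case/(@IVT_pos p _ _ l p_cont xn0 yn0) => z; exists z.
  by exists (x n); rewrite xn0 le_max lexx.
have z_le n : z n <= Num.max (x n) (y n) by case: (zP n) => /andP[].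
exists z; split; [|split].
- move=> n; have [/andP[-> _] _] := zP n; apply: le_trans (z_le n) _.
  by rewrite ge_max; case/andP: (x01 n) => _ ->; case/andP: (y01 n) => _ ->.
- apply: (@squeeze_cvgr _ _ _ _ (cst 0) (x \+ y)); last 2 first.
  + exact: cvg_cst.
  + by rewrite -[X in _ --> X](addr0 0); exact: cvgD.
  apply: nearW => n; have [/andP[z0 _] _] := zP n.
  rewrite /= ltW //=; apply: le_trans (z_le n) _.
  have /andP[xn0 _] := x01 n; have /andP[yn0 _] := y01 n.
  by rewrite ge_max lerDl lerDr !ltW.
- apply: cvg_near_cst; near=> n; have [_ ->] := zP n => //.
  rewrite -!lte_fin; apply/andP; split; near: n.
  + exact: px _ (open_ereal_lt' aL).
  + exact: py _ (open_ereal_gt' lb).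
Unshelve. all: end_near. Qed.

Lemma rh_seq_secant_derivative_mul_norm p :
  [set L | rh_seq_secant_derivative (fun x => x * p `|x|) L] = cluster0r p.
Proof.
have secantE (h : R^nat) : (forall n, 0 < h n <= 1) ->
    (fun n => ((h n * p `|h n| - 0 * p `|0 : R|) / h n)%:E) =
    (fun n => (p (h n))%:E).
  move=> h01; apply/funext => n; have /andP[hn0 _] := h01 n.
  by rewrite mul0r subr0 gtr0_norm // [h n * _]mulrC mulfK ?gt_eqF.
apply/seteqP; split=> L [h [h01 [h0 hL]]]; exists h.
  by rewrite -(secantE h h01).
by rewrite (secantE h h01).
Qed.

Lemma mul_norm_continuous p (A B : R) :
  (forall t, 0 < t -> {for t, continuous p}) ->
  (forall t, 0 < t -> `|p t| <= A + B / Num.sqrt t) ->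
  continuous (fun x : R => x * p `|x|).
Proof.
move=> p_cont p_le x; have [->|x0] := eqVneq x 0; last first.
  apply: continuousM; first exact: cvg_id.
  apply: continuous_comp; first exact: norm_continuous.
  by apply/p_cont; rewrite normr_gt0.
pose g (y : R) := A * `|y| + B * Num.sqrt `|y|.
have g0 : g y @[y --> 0] --> 0.
  have {2}-> : 0 = g 0 by rewrite /g normr0 sqrtr0 !mulr0 addr0.
  rewrite /g; apply: cvgD; apply: cvgM; try exact: cvg_cst.
    exact: norm_continuous.
  by apply: continuous_comp; [exact: norm_continuous | exact: sqrt_continuous].
have f_le (y : R) : `|y * p `|y| | <= g y.
  have [->|y0] := eqVneq y 0.
    by rewrite /g mul0r !normr0 sqrtr0 !mulr0 addr0.
  have sy0 : 0 < Num.sqrt `|y| by rewrite sqrtr_gt0 normr_gt0.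
  have sqrtE : `|y| * (B / Num.sqrt `|y|) = B * Num.sqrt `|y|.
    by rewrite -{1}(sqr_sqrtr (normr_ge0 y)); field; rewrite gt_eqF.
  rewrite normrM; apply: le_trans (ler_wpM2l (normr_ge0 y) (p_le _ _)) _.
    by rewrite normr_gt0.
  by rewrite mulrDr sqrtE mulrC.
rewrite /continuous_at mul0r.
apply: (@squeeze_cvgr _ _ _ _ (fun y => - g y) g); last exact: g0.
  by apply: nearW => y; rewrite -ler_norml.
by move/cvgN: g0; rewrite oppr0.
Qed.

Lemma natS_le_cvgy (c : nat -> R) :
  (forall n, n.+1%:R <= c n) -> c @ \oo --> +oo.
Proof.
move=> c_ge; apply: (ger_cvgy _ cvgr_idn); apply: nearW => n.
by apply: le_trans (c_ge n); rewrite ler_nat.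
Qed.

Lemma cvgy_sqrt T (F : set_system T) (FF : Filter F) (x : T -> R) :
  x @ F --> +oo -> Num.sqrt (x t) @[t --> F] --> +oo.
Proof.
move=> xy; apply/cvgryPge => A; near=> t.
have Ax : A ^+ 2 <= x t by near: t; exact: cvgry_ge.
apply: le_trans (ler_norm A) _.
by rewrite -sqrtr_sqr ler_sqrt // (le_trans (sqr_ge0 A)).
Unshelve. all: end_near. Qed.

Lemma cvgey_affine T (F : set_system T) (FF : Filter F) (x : T -> R) u k :
  x @ F --> +oo -> 0 < k -> (u + k * x t)%:E @[t --> F] --> +oo%E.
Proof.
move=> xy k0; apply/cvgeryP/cvgryPge => A; near=> t.
have : (A - u) / k <= x t by near: t; exact: cvgry_ge.
by rewrite ler_pdivrMr // => ?; nra.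
Unshelve. all: end_near. Qed.

Lemma cvgeNy_affine T (F : set_system T) (FF : Filter F) (x : T -> R) u k :
  x @ F --> +oo -> k < 0 -> (u + k * x t)%:E @[t --> F] --> -oo%E.
Proof.
move=> xy k0; apply/cvgerNyP/cvgrNyPle => A; near=> t.
have : (u - A) / - k <= x t by near: t; exact: cvgry_ge.
by rewrite ler_pdivrMr ?oppr_gt0 // => ?; nra.
Unshelve. all: end_near. Qed.

Lemma cluster0rV (c : nat -> R) : (forall n, n.+1%:R <= c n) ->
  forall p L, (fun n => (p (c n)^-1)%:E) @ \oo --> L -> cluster0r p L.
Proof.
move=> c_ge p L pcL; have c_gt0 n : 0 < c n by apply: lt_le_trans (c_ge n).
exists (fun n => (c n)^-1); split; [|split] => //.
- move=> n; rewrite invr_gt0 c_gt0 invf_le1 //.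
  by rewrite (le_trans _ (c_ge n)) // ler1n.
- by apply/gtr0_cvgV0; [exact: nearW | exact: natS_le_cvgy].
Qed.

Definition osc (al be ga de t : R) : R :=
  al + be * sin t^-1 + (ga + de * sin t^-1) / Num.sqrt t.

Section Osc.
Variables al be ga de : R.

Lemma osc_continuous t : 0 < t -> {for t, continuous (osc al be ga de)}.
Proof.
move=> t0; have lin_cont c d : {for t, continuous (fun s : R => c + d * sin s^-1)}.
  apply: continuousD; first exact: cvg_cst.
  apply: continuousM; first exact: cvg_cst.
  apply: continuous_comp; first by apply: inv_continuous; rewrite gt_eqF.
  exact: continuous_sin.
apply: continuousD; first exact: lin_cont.
apply: continuousM; first exact: lin_cont.
apply: continuousV; first by rewrite gt_eqF // sqrtr_gt0.
exact: sqrt_continuous.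
Qed.

Lemma norm_osc_le t : 0 < t ->
  `|osc al be ga de t| <= (`|al| + `|be|) + (`|ga| + `|de|) / Num.sqrt t.
Proof.
move=> t0; have s1 : `|sin t^-1| <= 1 by rewrite ler_norml sin_geN1 sin_le1.
have q0 : 0 < Num.sqrt t by rewrite sqrtr_gt0.
have lin_le c d : `|c + d * sin t^-1| <= `|c| + `|d|.
  by apply: le_trans (ler_normD _ _) _; rewrite lerD2l normrM ler_piMr.
apply: le_trans (ler_normD _ _) _; apply: lerD; first exact: lin_le.
by rewrite normrM normfV (gtr0_norm q0) ler_pM2r ?invr_gt0.
Qed.

(* For c <= 0 both sides degenerate to al + be * sin c, as sqrt c = 0 and
   0^-1 = 0. *)
Lemma oscV c :
  osc al be ga de c^-1 = al + be * sin c + (ga + de * sin c) * Num.sqrt c.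
Proof.
rewrite /osc invrK; congr (_ + _ * _).
have [c0|c0] := leP 0 c; first by rewrite sqrtrV ?invrK.
by rewrite !ler0_sqrtr ?invr0 // ?invr_le0 ltW.
Qed.

End Osc.

Definition peak n : R := pi / 2 + (pi *+ 2) *+ n.
Definition trough n : R := peak n + pi.

Lemma peak_ge n : n.+1%:R <= peak n.
Proof.
rewrite /peak -addn1 natrD addrC; apply: lerD.
  by rewrite ler_pdivlMr // mul1r pi_ge2.
by apply: (@ler_wMn2r R n 1); have := pi_ge2 R; rewrite mulr2n; lra.
Qed.

Lemma trough_ge n : n.+1%:R <= trough n.
Proof. by apply: le_trans (peak_ge n) _; rewrite lerDl ltW // pi_gt0. Qed.

Lemma sin_peak n : sin (peak n) = 1.
Proof. by rewrite /peak (periodicn (@sinD2pi R)) sin_pihalf. Qed.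

Lemma sin_trough n : sin (trough n) = -1.
Proof. by rewrite /trough sinDpi sin_peak. Qed.

Lemma cvgy_sqrt_peak : Num.sqrt (peak n) @[n --> \oo] --> +oo.
Proof. by apply: cvgy_sqrt; exact: natS_le_cvgy peak_ge. Qed.

Lemma cvgy_sqrt_trough : Num.sqrt (trough n) @[n --> \oo] --> +oo.
Proof. by apply: cvgy_sqrt; exact: natS_le_cvgy trough_ge. Qed.

Definition oscillates_between p a b :=
  [/\ forall t, 0 < t -> (a <= (p t)%:E <= b)%E, cluster0r p a & cluster0r p b].

Lemma cluster0r_eq_cc p a b : (forall t, 0 < t -> {for t, continuous p}) ->
  oscillates_between p a b -> cluster0r p = ereal_cc a b.
Proof.
move=> p_cont [p_ab pa pb]; apply/seteqP; split.
  exact: cluster0r_subset_cc.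
exact: cluster0r_cc_subset.
Qed.

Lemma oscillates_fin r s : r <= s ->
  oscillates_between (osc ((r + s) / 2) ((s - r) / 2) 0 0) r%:E s%:E.
Proof.
move=> rs; split.
- move=> t _; have := sin_le1 t^-1; have := sin_geN1 t^-1.
  rewrite !lee_fin /osc !mul0r add0r mul0r addr0 => ? ?.
  by apply/andP; split; nra.
- apply: (cluster0rV _ trough_ge); apply: cvg_near_cst; apply: nearW => n.
  by rewrite oscV sin_trough; congr (_%:E); lra.
- apply: (cluster0rV _ peak_ge); apply: cvg_near_cst; apply: nearW => n.
  by rewrite oscV sin_peak; congr (_%:E); lra.
Qed.

Lemma oscillates_fin_y r : oscillates_between (osc r 0 1 1) r%:E +oo.
Proof.
split.
- move=> t t0; have := sin_geN1 t^-1; rewrite leey lee_fin andbT /osc => ?.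
  by rewrite mul0r addr0 lerDl divr_ge0 ?sqrtr_ge0 //; lra.
- apply: (cluster0rV _ trough_ge); apply: cvg_near_cst; apply: nearW => n.
  by rewrite oscV sin_trough; congr (_%:E); lra.
- apply: (cluster0rV _ peak_ge); under eq_fun do rewrite oscV sin_peak.
  by apply: cvgey_affine cvgy_sqrt_peak _; lra.
Qed.

Lemma oscillates_Ny_fin s : oscillates_between (osc s 0 (-1) (-1)) -oo s%:E.
Proof.
split.
- move=> t t0; have := sin_geN1 t^-1; rewrite leNye lee_fin /osc => ?.
  by rewrite mul0r addr0 gerDl mulr_le0_ge0 ?invr_ge0 ?sqrtr_ge0 //; lra.
- apply: (cluster0rV _ peak_ge); under eq_fun do rewrite oscV sin_peak.
  by apply: cvgeNy_affine cvgy_sqrt_peak _; lra.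
- apply: (cluster0rV _ trough_ge); apply: cvg_near_cst; apply: nearW => n.
  by rewrite oscV sin_trough; congr (_%:E); lra.
Qed.

Lemma oscillates_Ny_y : oscillates_between (osc 0 0 0 1) -oo +oo.
Proof.
split.
- by move=> t _; rewrite leNye leey.
- apply: (cluster0rV _ trough_ge); under eq_fun do rewrite oscV sin_trough.
  by apply: cvgeNy_affine cvgy_sqrt_trough _; lra.
- apply: (cluster0rV _ peak_ge); under eq_fun do rewrite oscV sin_peak.
  by apply: cvgey_affine cvgy_sqrt_peak _; lra.
Qed.

End ClusterSet.

Theorem theorem2p7 (R : realType) (a b : \bar R) :
  (a < b)%E ->
  exists f : R -> R,
    {within `[0, 1], continuous f} /\
    [set L | rh_seq_secant_derivative f L] = ereal_cc a b.
Proof.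
move=> ab.
suff [al [be [ga [de osc_ab]]]] :
    exists al be ga de : R, oscillates_between (osc al be ga de) a b.
  exists (fun x => x * osc al be ga de `|x|); split.
    apply/continuous_subspaceT/mul_norm_continuous; first exact: osc_continuous.
    exact: norm_osc_le.
  rewrite rh_seq_secant_derivative_mul_norm.
  exact: cluster0r_eq_cc (@osc_continuous _ _ _ _ _) osc_ab.
case: a b ab => [r| |] [s| |] //= ab.
- by exists ((r + s) / 2), ((s - r) / 2), 0, 0; apply/oscillates_fin/ltW.
- by exists r, 0, 1, 1; exact: oscillates_fin_y.
- by exists s, 0, (-1), (-1); exact: oscillates_Ny_fin.
- by exists 0, 0, 0, 1; exact: oscillates_Ny_y.
Qed.
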